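(* Let $f_1,\dots,f_n$ be nondecreasing linear functions at least one of which is constant, and put $\beta_{\min}=\min\{\beta(f_i)\mid\alpha(f_i)=0\}$ and $\beta_{\rm OPT}=\min\{f^\sigma\mid\sigma\text{ a permutation of }[n]\}$ (each $f^\sigma$ is a constant function, identified with its value). Then $\beta_{\rm OPT}=\beta_{\min}$ if and only if $\theta(f_i)\in[\theta(\beta_{\min})-\pi,\theta(\beta_{\min})]_{2\pi}\cup\{\bot\}$ for every $i\in[n]$.
   Context: A linear function is $f(x)=ax+b$; $\alpha(f)=a$, $\beta(f)=b$; nondecreasing means $a\ge0$, constant means $a=0$. $\vec f=(b,1-a)^\top$ and $\theta(f)\in[0,2\pi)$ is its polar angle, $\theta(f)=\bot$ if $\vec f=0$. For a real $c$, $\theta(c)$ denotes the angle of the constant function $x\mapsto c$, i.e. the polar angle of $(c,1)^\top$. $[\theta_1,\theta_2]_{2\pi}=\{\theta\in[\lambda_1,\lambda_2]\mid\lambda_1-\theta_1,\lambda_2-\theta_2\in2\pi\mathbb{Z},\ \lambda_2-\lambda_1\in[0,2\pi)\}$. $f^\sigma=f_{\sigma(n)}\circ\cdots\circ f_{\sigma(1)}$. *)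

From HB Require Import structures.
From mathcomp Require Import all_boot all_order all_algebra all_fingroup.
From mathcomp Require Import all_classical all_reals all_analysis.
Set Implicit Arguments. Unset Strict Implicit. Unset Printing Implicit Defensive.
Import Order.TTheory GRing.Theory Num.Theory.
Local Open Scope ring_scope.

Definition linfn (R : realType) := (R * R)%type.
Definition alpha {R : realType} (f : linfn R) : R := f.1.
Definition beta {R : realType} (f : linfn R) : R := f.2.
Definition lf_eval {R : realType} (f : linfn R) (x : R) : R := alpha f * x + beta f.

Definition lf_comp {R : realType} (g h : linfn R) : linfn R :=
  (alpha g * alpha h, alpha g * beta h + beta g).
Definition lf_id {R : realType} : linfn R := (1, 0).

(* f^sigma = f_{sigma(n)} o ... o f_{sigma(1)} *)
Definition lf_perm {R : realType} {n : nat} (f : 'I_n -> linfn R)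
  (s : {perm 'I_n}) : linfn R :=
  foldl (fun acc i => lf_comp (f (s i)) acc) lf_id (enum 'I_n).

Definition polar_angle {R : realType} (x y : R) : R :=
  let r := Num.sqrt (x ^+ 2 + y ^+ 2) in
  if 0 <= y then acos (x / r) else 2 * pi - acos (x / r).

(* vec f = (b, 1 - a); theta f = None encodes bottom *)
Definition theta {R : realType} (f : linfn R) : option R :=
  if (beta f == 0) && (1 - alpha f == 0) then None
  else Some (polar_angle (beta f) (1 - alpha f)).

(* theta of the constant function x |-> c, i.e. polar angle of (c, 1) *)
Definition theta_c {R : realType} (c : R) : R := polar_angle c 1.

Definition arc2pi {R : realType} (t1 t2 : R) : set R :=
  [set t | exists l1 l2 : R,
     (exists k : int, l1 - t1 = k%:~R * (2 * pi)) /\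
     (exists k : int, l2 - t2 = k%:~R * (2 * pi)) /\
     0 <= l2 - l1 < 2 * pi /\ l1 <= t <= l2].

(* beta_min, with seed the beta of a known constant function f i0 *)
Definition beta_min {R : realType} {n : nat} (f : 'I_n -> linfn R) (i0 : 'I_n) : R :=
  \big[Num.min/beta (f i0)]_(i | alpha (f i) == 0) beta (f i).

Definition beta_opt {R : realType} {n : nat} (f : 'I_n -> linfn R) : R :=
  \big[Num.min/beta (lf_perm f 1%g)]_(s : {perm 'I_n}) beta (lf_perm f s).

From mathcomp Require Import all_boot all_order all_algebra all_fingroup.
From mathcomp Require Import all_classical all_reals all_analysis.
From mathcomp Require Import ring lra zify.
Set Implicit Arguments.
Unset Strict Implicit.
Unset Printing Implicit Defensive.

Import Order.TTheory GRing.Theory Num.Theory.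
Local Open Scope ring_scope.

(* The vector (b, 1 - a) of f has angle in [theta(m) - pi, theta(m)] exactly when it
   lies in the closed half-plane to the right of (m, 1), i.e. when m (1 - a) <= b, i.e.
   when f(m) >= m.  So the condition says that every f_i maps [beta_min, +oo) into
   itself.  Then so does every composition f^sigma, and as f^sigma is constant its
   value is >= beta_min; the value beta_min is reached by applying the minimal constant
   function last.  Conversely, if f_i(beta_min) < beta_min, applying the minimal
   constant function and then f_i gives a smaller value. *)

Section LinearFunctions.
Variable R : realType.
Implicit Types (g h : linfn R) (x y : R).

Lemma alpha_comp g h : alpha (lf_comp g h) = alpha g * alpha h.
Proof. by []. Qed.

Lemma beta_comp g h : beta (lf_comp g h) = lf_eval g (beta h).
Proof. by []. Qed.

Lemma lf_eval_comp g h x : lf_eval (lf_comp g h) x = lf_eval g (lf_eval h x).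
Proof. by rewrite /lf_eval alpha_comp beta_comp /lf_eval; ring. Qed.

Lemma lf_eval_id x : lf_eval lf_id x = x.
Proof. by rewrite /lf_eval mul1r addr0. Qed.

Lemma lf_eval_const g x : alpha g = 0 -> lf_eval g x = beta g.
Proof. by rewrite /lf_eval => ->; rewrite mul0r add0r. Qed.

Lemma lf_comp_const g h : alpha g = 0 -> lf_comp g h = g.
Proof.
by case: g => a b /= a0; rewrite /lf_comp /alpha /beta /= a0 !mul0r add0r.
Qed.

Lemma lf_eval_homo g : 0 <= alpha g -> {homo lf_eval g : x y / x <= y}.
Proof. by move=> ag x y xy; rewrite /lf_eval lerD2r ler_wpM2l. Qed.

End LinearFunctions.

Section Chains.
Variables (R : realType) (I : Type) (f : I -> linfn R).

Definition lf_chain (h : linfn R) (t : seq I) : linfn R :=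
  foldl (fun acc i => lf_comp (f i) acc) h t.

Lemma lf_chain_cat h t1 t2 : lf_chain h (t1 ++ t2) = lf_chain (lf_chain h t1) t2.
Proof. exact: foldl_cat. Qed.

Lemma lf_chain_rcons h t i : lf_chain h (rcons t i) = lf_comp (f i) (lf_chain h t).
Proof. exact: foldl_rcons. Qed.

Lemma alpha_lf_chain h t : alpha (lf_chain h t) = alpha h * \prod_(i <- t) alpha (f i).
Proof.
elim: t h => [|i t IHt] h /=; first by rewrite big_nil mulr1.
by rewrite IHt big_cons alpha_comp mulrCA mulrA.
Qed.

Lemma lf_chain_ge_at (m : R) h t :
  (forall i, 0 <= alpha (f i)) -> (forall i, m <= lf_eval (f i) m) ->
  0 <= alpha h -> m <= lf_eval h m -> m <= lf_eval (lf_chain h t) m.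
Proof.
move=> f_ge0 f_ge_m; elim: t h => [|i t IHt] h //= h_ge0 h_ge_m.
apply: IHt; first by rewrite alpha_comp mulr_ge0.
by rewrite lf_eval_comp (le_trans (f_ge_m i)) // lf_eval_homo.
Qed.

End Chains.

Section Permutations.
Variables (R : realType) (n : nat) (f : 'I_n -> linfn R).

Lemma lf_permE s : lf_perm f s = lf_chain f lf_id [seq s i | i <- enum 'I_n].
Proof. by rewrite /lf_perm /lf_chain; elim: (enum 'I_n) lf_id => //=. Qed.

Lemma alpha_lf_perm s : alpha (lf_perm f s) = \prod_i alpha (f i).
Proof.
rewrite lf_permE alpha_lf_chain mul1r big_map big_enum /=.
by rewrite [RHS](reindex_inj (@perm_inj _ s)).
Qed.

Lemma lf_perm_suffix (t : seq 'I_n) : uniq t ->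
  exists s, lf_perm f s = lf_chain f (lf_chain f lf_id [seq i <- enum 'I_n | i \notin t]) t.
Proof.
move=> t_uniq.
have order_perm : perm_eq ([seq i <- enum 'I_n | i \notin t] ++ t) (ord_tuple n).
  rewrite val_ord_tuple perm_catC perm_sym -(perm_filterC (mem t) (enum 'I_n)).
  rewrite perm_sym perm_cat2r perm_sym.
  apply: uniq_perm => [||i]; rewrite ?filter_uniq // -?enumT ?enum_uniq //.
  by rewrite (@mem_filter _ (mem t)) mem_enum andbT.
have [s sE] := tuple_permP order_perm.
exists s; rewrite lf_permE -lf_chain_cat sE /=.
by congr lf_chain; apply: eq_map => i; rewrite tnth_ord_tuple.
Qed.

End Permutations.

Section Angles.
Variable R : realType.

Lemma intr_between_m1_1 (k : int) : (-1 : R) < (k%:~R : R) < 1 -> k = 0.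
Proof.
case/andP=> k_gt k_lt.
have : (-1)%:~R < k%:~R :> R by rewrite rmorphN rmorph1.
have : k%:~R < 1%:~R :> R by rewrite rmorph1.
rewrite !ltr_int; lia.
Qed.

Lemma intr_between_m1_2 (k : int) : (-1 : R) < (k%:~R : R) < 2 -> k = 0 \/ k = 1.
Proof.
case/andP=> k_gt k_lt.
have : (-1)%:~R < k%:~R :> R by rewrite rmorphN rmorph1.
have : k%:~R < 2%:~R :> R by [].
rewrite !ltr_int; lia.
Qed.

Lemma arc2piE (th t : R) : 0 < th < pi -> 0 <= t < 2 * pi ->
  arc2pi (th - pi) th t <-> t <= th \/ th + pi <= t.
Proof.
move=> /andP[th_gt0 th_ltpi] /andP[t_ge0 t_lt2pi]; have pi_gt0 := @pi_gt0 R.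
split.
- case=> l1 [l2 [[k1 l1E] [[k2 l2E] [/andP[d_ge0 d_lt] /andP[l1t tl2]]]]].
  have k2E : k2 = k1.
    suff : k2 - k1 = 0 by lia.
    by apply: intr_between_m1_1; rewrite intrB; apply/andP; split; nra.
  subst k2.
  have [k1E|k1E] : k1 = 0 \/ k1 = 1.
    by apply: intr_between_m1_2; apply/andP; split; nra.
  + by left; move: l2E; rewrite k1E mulr0z mul0r; lra.
  + by right; move: l1E; rewrite k1E rmorph1 mul1r; lra.
- case=> ht.
  + exists (th - pi), th; split; last split; try by exists 0; rewrite mulr0z mul0r subrr.
    by split; apply/andP; split; lra.
  + exists (th + pi), (th + 2 * pi); split; last split; try by exists 1; rewrite rmorph1 mul1r; lra.
    by split; apply/andP; split; lra.
Qed.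

Lemma sqrt_sum_sqr (x y : R) : (x != 0) || (y != 0) ->
  0 < Num.sqrt (x ^+ 2 + y ^+ 2) /\ Num.sqrt (x ^+ 2 + y ^+ 2) ^+ 2 = x ^+ 2 + y ^+ 2.
Proof.
move=> xy_neq0; have s_gt0 : 0 < x ^+ 2 + y ^+ 2.
  by case/orP: xy_neq0 => [x0|y0]; [apply: ltr_pwDl | apply: ltr_wpDl];
     rewrite ?sqr_ge0 ?exprn_even_gt0.
by rewrite sqrtr_gt0 sqr_sqrtr ?ltW.
Qed.

Section Cross.
Variables (m b c ru rv : R).

Lemma sqr_cross : ru ^+ 2 = m ^+ 2 + 1 -> rv ^+ 2 = b ^+ 2 + c ^+ 2 ->
  (b * ru) ^+ 2 - (m * rv) ^+ 2 = (b - m * c) * (b + m * c).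
Proof. by move=> ruE rvE; rewrite !exprMn ruE rvE; ring. Qed.

Lemma cross_le : 0 < ru -> ru ^+ 2 = m ^+ 2 + 1 -> 0 < rv -> rv ^+ 2 = b ^+ 2 + c ^+ 2 ->
  0 <= c -> m * c <= b -> m * rv <= b * ru.
Proof.
move=> ru_gt0 ruE rv_gt0 rvE c_ge0 mc_le; have [b_ge0|b_lt0] := leP 0 b.
- have [m_le0|m_gt0] := leP m 0; first nra.
  have : (m * rv) ^+ 2 <= (b * ru) ^+ 2.
    by rewrite -subr_ge0 sqr_cross //; apply: mulr_ge0; nra.
  have : 0 <= b * ru by nra.
  nra.
- have m_lt0 : m < 0 by nra.
  have : (b * ru) ^+ 2 <= (m * rv) ^+ 2.
    by rewrite -subr_le0 sqr_cross //; apply: mulr_ge0_le0; nra.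
  have : m * rv < 0 by nra.
  have : b * ru < 0 by nra.
  nra.
Qed.

Lemma cross_lt : 0 < ru -> ru ^+ 2 = m ^+ 2 + 1 -> 0 < rv -> rv ^+ 2 = b ^+ 2 + c ^+ 2 ->
  0 <= c -> b < m * c -> b * ru < m * rv.
Proof.
move=> ru_gt0 ruE rv_gt0 rvE c_ge0 mc_gt; have [b_ge0|b_lt0] := leP 0 b.
- have m_gt0 : 0 < m by nra.
  have : (b * ru) ^+ 2 < (m * rv) ^+ 2.
    by rewrite -subr_lt0 sqr_cross // pmulr_llt0 ?subr_lt0 //; nra.
  have : 0 < m * rv by nra.
  have : 0 <= b * ru by nra.
  nra.
- have [m_ge0|m_lt0] := leP 0 m; first nra.
  have : (m * rv) ^+ 2 < (b * ru) ^+ 2.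
    by rewrite -subr_gt0 sqr_cross // nmulr_rgt0; nra.
  have : m * rv < 0 by nra.
  have : b * ru < 0 by nra.
  nra.
Qed.

Lemma cross_leE : 0 < ru -> ru ^+ 2 = m ^+ 2 + 1 -> 0 < rv -> rv ^+ 2 = b ^+ 2 + c ^+ 2 ->
  0 <= c -> (m * rv <= b * ru) = (m * c <= b).
Proof.
move=> ru_gt0 ruE rv_gt0 rvE c_ge0; apply/idP/idP; last exact: cross_le.
by apply: contraTT; rewrite -!ltNge; exact: cross_lt.
Qed.

End Cross.

Lemma normalized_bounds (x y : R) : (x != 0) || (y != 0) ->
  -1 <= x / Num.sqrt (x ^+ 2 + y ^+ 2) <= 1.
Proof.
move=> /sqrt_sum_sqr[r_gt0 rE].
by rewrite ler_pdivrMr // ler_pdivlMr // mul1r mulN1r; apply/andP; split; nra.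
Qed.

Lemma normalized_bounds_lt (x y : R) : y != 0 ->
  -1 < x / Num.sqrt (x ^+ 2 + y ^+ 2) < 1.
Proof.
move=> y_neq0; have /sqrt_sum_sqr[r_gt0 rE] : (x != 0) || (y != 0) by rewrite y_neq0 orbT.
have y2_gt0 : 0 < y ^+ 2 by rewrite exprn_even_gt0.
by rewrite ltr_pdivrMr // ltr_pdivlMr // mul1r mulN1r; apply/andP; split; nra.
Qed.

Lemma ler_acos (x y : R) : -1 <= x <= 1 -> -1 <= y <= 1 -> (acos x <= acos y) = (y <= x).
Proof.
move=> x_bnd y_bnd.
by rewrite leNgt -ltr_cos ?acosK ?in_itv /= ?acos_ge0 ?acos_lepi // -leNgt.
Qed.

Lemma le_acos_normalized (m b c : R) : 0 <= c -> (b != 0) || (c != 0) ->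
  (acos (b / Num.sqrt (b ^+ 2 + c ^+ 2)) <= acos (m / Num.sqrt (m ^+ 2 + 1)))
    = (m * c <= b).
Proof.
move=> c_ge0 bc_neq0.
have m1_neq0 : (m != 0) || (1 != 0 :> R) by rewrite oner_neq0 orbT.
have [ru_gt0 ruE] := sqrt_sum_sqr m1_neq0; rewrite expr1n in ru_gt0 ruE.
have [rv_gt0 rvE] := sqrt_sum_sqr bc_neq0.
have u_bnd := normalized_bounds m1_neq0; rewrite expr1n in u_bnd.
rewrite ler_acos ?normalized_bounds // ler_pdivrMr // mulrAC ler_pdivlMr //.
exact: cross_leE.
Qed.

Lemma polar_angle_in_arc (m b c : R) : (b != 0) || (c != 0) ->
  arc2pi (theta_c m - pi) (theta_c m) (polar_angle b c) <-> m * c <= b.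
Proof.
move=> bc_neq0; rewrite /theta_c /polar_angle ler01 expr1n.
have pi_gt0 := @pi_gt0 R.
move: (normalized_bounds_lt m (oner_neq0 R)); rewrite expr1n => /andP[u_gt u_lt].
have th_gt0 : 0 < acos (m / Num.sqrt (m ^+ 2 + 1)) by apply: acos_gt0; rewrite u_lt ltW.
have th_ltpi : acos (m / Num.sqrt (m ^+ 2 + 1)) < pi by apply: acos_ltpi; rewrite u_gt ltW.
have v_bnd := normalized_bounds bc_neq0.
have t_ge0 := acos_ge0 v_bnd; have t_lepi := acos_lepi v_bnd.
have [c_ge0|c_lt0] := leP 0 c.
- rewrite arc2piE ?th_gt0 ?th_ltpi //; last by apply/andP; split; lra.
  rewrite -le_acos_normalized //; split; [by case=> //; lra | by left].
- have /andP[v_gt v_lt] := normalized_bounds_lt b (ltr0_neq0 c_lt0).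
  have t_gt0 : 0 < acos (b / Num.sqrt (b ^+ 2 + c ^+ 2)) by apply: acos_gt0; rewrite v_lt ltW.
  have t_ltpi : acos (b / Num.sqrt (b ^+ 2 + c ^+ 2)) < pi by apply: acos_ltpi; rewrite v_gt ltW.
  rewrite arc2piE ?th_gt0 ?th_ltpi //; last by apply/andP; split; lra.
  have -> : m * c <= b = ((- m) * (- c) <= b) by rewrite mulrNN.
  rewrite -le_acos_normalized ?oppr_ge0 ?(ltW c_lt0) ?oppr_eq0 //.
  rewrite !sqrrN mulNr acosN ?(ltW u_gt) ?(ltW u_lt) //.
  by split; [case; lra | right; lra].
Qed.

End Angles.

Definition theta_in_arc (R : realType) (m : R) (g : linfn R) : Prop :=
  match theta g with
  | None => True
  | Some t => arc2pi (theta_c m - pi) (theta_c m) t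
  end.

Lemma theta_in_arcP (R : realType) (m : R) (g : linfn R) :
  theta_in_arc m g <-> m <= lf_eval g m.
Proof.
rewrite /theta_in_arc /theta /lf_eval; case: ifP => [/andP[/eqP b0 /eqP a1]|vec_neq0].
- by rewrite b0 addr0 (_ : alpha g = 1) ?mul1r //; lra.
- rewrite polar_angle_in_arc; last by rewrite -negb_and vec_neq0.
  by split; lra.
Qed.

Section Optimum.
Variables (R : realType) (n : nat) (f : 'I_n -> linfn R) (i0 : 'I_n).
Hypotheses (f_ge0 : forall i, 0 <= alpha (f i)) (f_i0_const : alpha (f i0) = 0).

Lemma beta_min_attained : exists2 j, alpha (f j) = 0 & beta (f j) = beta_min f i0.
Proof.
have i0_const : alpha (f i0) == 0 by apply/eqP.
case: (@arg_minP _ _ _ i0 (fun i => alpha (f i) == 0) (fun i => beta (f i)) i0_const).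
move=> j /eqP j_const j_min.
exists j => //; apply/le_anti; rewrite /beta_min bigmin_le_cond ?j_const // andbT.
by apply: le_bigmin => [|i /j_min //]; exact: j_min.
Qed.

Lemma beta_lf_perm s x : beta (lf_perm f s) = lf_eval (lf_perm f s) x.
Proof.
by rewrite lf_eval_const // alpha_lf_perm (bigD1 i0) //= f_i0_const mul0r.
Qed.

Lemma beta_opt_ge (m : R) : (forall i, m <= lf_eval (f i) m) -> m <= beta_opt f.
Proof.
move=> f_ge_m; apply: le_bigmin => [|s _]; rewrite (beta_lf_perm _ m) lf_permE;
  by apply: lf_chain_ge_at; rewrite ?lf_eval_id ?ler01.
Qed.

Lemma beta_opt_le_const (j : 'I_n) : alpha (f j) = 0 -> beta_opt f <= beta (f j).
Proof.
move=> j_const; have [s sE] := lf_perm_suffix f (t := [:: j]) erefl.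
rewrite (le_trans (bigmin_le _ s (fun s => beta (lf_perm f s)))) //.
by rewrite sE (lf_chain_rcons _ _ [::]) lf_comp_const.
Qed.

Lemma beta_opt_le_eval_const (j i : 'I_n) : alpha (f j) = 0 -> j != i ->
  beta_opt f <= lf_eval (f i) (beta (f j)).
Proof.
move=> j_const j_neq_i; have [|s sE] := lf_perm_suffix f (t := [:: j; i]).
  by rewrite /= inE j_neq_i.
rewrite (le_trans (bigmin_le _ s (fun s => beta (lf_perm f s)))) //.
by rewrite sE (lf_chain_rcons _ _ [:: j]) beta_comp (lf_chain_rcons _ _ [::]) lf_comp_const.
Qed.

End Optimum.

Theorem mainTheorem16 (R : realType) (n : nat) (f : 'I_n -> linfn R) (i0 : 'I_n) :
  (forall i, 0 <= alpha (f i)) ->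
  alpha (f i0) = 0 ->
  beta_opt f = beta_min f i0 <->
  (forall i, match theta (f i) with
             | None => True
             | Some t => arc2pi (theta_c (beta_min f i0) - pi) (theta_c (beta_min f i0)) t
             end).
Proof.
move=> f_ge0 f_i0_const.
have [j j_const j_min] := beta_min_attained f_i0_const.
set m := beta_min f i0 in j_min *.
split=> [opt_min i | in_arc].
- apply/(theta_in_arcP m (f i)); rewrite leNgt; apply/negP => fi_lt.
  have j_neq_i : j != i.
    by apply: contraTneq fi_lt => <-; rewrite lf_eval_const // j_min ltxx.
  have := beta_opt_le_eval_const j_const j_neq_i.
  by rewrite opt_min j_min leNgt fi_lt.
- apply/le_anti; rewrite -{1}j_min beta_opt_le_const //.
  by apply: (beta_opt_ge f_ge0 f_i0_const) => i; apply/theta_in_arcP/in_arc.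
Qed.
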